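(* Let $c\in(0,1)$ and let $\sigma>0$ satisfy $C_{\mathrm{BS}}(\sigma)=c$. Let $g(y)=\log C_{\mathrm{BS}}(y)-\log c$ for $y>0$. The Newton–Raphson iteration $\sigma_{n+1}=\sigma_n-g(\sigma_n)/g'(\sigma_n)$ for the equation $g(y)=0$ can be written as $\sigma_{n+1}=N(\sigma_n)$ with $$N(y)=y+\left[\frac{d_1(y)^2}{2}-\log C_{\mathcal V}(y)+\log\!\big(c\sqrt{2\pi}\big)\right]C_{\mathcal V}(y).$$ Moreover, if $0<\sigma_0\le\sigma$, then the iterates satisfy $\sigma_0\le\sigma_1\le\sigma_2\le\cdots\le\sigma$ and $\sigma_n\to\sigma$ as $n\to\infty$.
   Context: Fix $k\ge 0$. Let $\Phi$ and $\phi$ denote the standard normal distribution function and density. For $\sigma>0$ put $d_1(\sigma)=-k/\sigma+\sigma/2$, $d_2(\sigma)=-k/\sigma-\sigma/2$, and $C_{\mathrm{BS}}(\sigma)=\Phi(d_1(\sigma))-e^k\,\Phi(d_2(\sigma))$, a strictly increasing bijection from $(0,\infty)$ onto $(0,1)$; for $c\in(0,1)$ the implied volatility is the unique $\sigma>0$ with $C_{\mathrm{BS}}(\sigma)=c$. The price-to-vega ratio is $C_{\mathcal V}(y)=C_{\mathrm{BS}}(y)/\phi(d_1(y))$. *)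

From Stdlib Require Import Reals.
From Coquelicot Require Import Coquelicot.
Open Scope R_scope.

Definition phi (x : R) : R := exp (- x ^ 2 / 2) / sqrt (2 * PI).

Definition Phi (x : R) : R :=
  RInt_gen phi (Rbar_locally m_infty) (at_point x).

Definition d1 (k s : R) : R := - k / s + s / 2.
Definition d2 (k s : R) : R := - k / s - s / 2.

Definition C_BS (k s : R) : R := Phi (d1 k s) - exp k * Phi (d2 k s).

Definition C_V (k y : R) : R := C_BS k y / phi (d1 k y).

Definition g_fun (k c y : R) : R := ln (C_BS k y) - ln c.

Definition N_map (k c y : R) : R :=
  y + ((d1 k y) ^ 2 / 2 - ln (C_V k y) + ln (c * sqrt (2 * PI))) * C_V k y.

From Pilot Require Import Defs.
From Stdlib Require Import Reals Lra Psatz.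
From Coquelicot Require Import Coquelicot.
Open Scope R_scope.

(** The vega identity [C_BS' = phi(d1)] (from
   [Phi' = phi] and [e^k phi(d2) = phi(d1)]) shows that [g' = phi(d1) / C_BS] is
   positive; rewriting [g / g'] with [log phi(d1) = - d1^2/2 - log sqrt(2 pi)]
   turns the Newton step into the map [N].  The heart of the convergence proof is
   the concavity of [g], i.e. that the vega-to-price ratio [g'] is nonincreasing.
   Its derivative has the sign of [r C_BS - phi(d1)], where [r] is the
   logarithmic slope of the vega; where [r > 0] the inequality [C_BS <= phi(d1)/r]
   follows from the log-concavity of the vega, comparing [C_BS] with the
   antiderivative of an exponential tangent and letting the volatility go to 0.
   Finally, Newton's method for an increasing concave function, started left of
   the root, increases and stays below the root, and its limit is the root. *)

Lemma exp_monotone x y : x <= y -> exp x <= exp y.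
Proof. intros [Hlt | ->]; [left; now apply exp_increasing | apply Rle_refl]. Qed.

Lemma one_le_exp x : 0 <= x -> 1 <= exp x.
Proof. intros Hx. rewrite <- exp_0. now apply exp_monotone. Qed.

Lemma mean_value (h dh : R -> R) (a b : R) :
  a <= b -> (forall x, a <= x <= b -> is_derive h x (dh x)) ->
  exists xi, a <= xi <= b /\ h b - h a = dh xi * (b - a).
Proof.
  intros Hab Hd.
  destruct (MVT_gen h a b dh) as [xi [Hxi Eq]];
    rewrite ?Rmin_left, ?Rmax_right in * by exact Hab.
  - intros x Hx; apply Hd; lra.
  - intros x Hx. apply continuity_pt_filterlim, (ex_derive_continuous (V := R_NormedModule)).
    exists (dh x); now apply Hd.
  - now exists xi.
Qed.

(** If [h s] is below every value of [h] on (0, s] and [h w = O(w)] as [w -> 0+],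
    then [h s <= 0].  This is how the small-volatility behaviour of prices is used. *)
Lemma nonpos_of_linear_bound (h : R -> R) (K s : R) : 0 < s ->
  (forall w, 0 < w <= s -> h s <= h w /\ h w <= K * w) -> h s <= 0.
Proof.
  intros Hs Hh. destruct (Rle_lt_dec (h s) 0) as [Hle | Hgt]; [exact Hle | exfalso].
  set (w := Rmin s (h s / (2 * (Rabs K + 1)))).
  assert (HK : 0 < Rabs K + 1) by (generalize (Rabs_pos K); lra).
  assert (Hw : 0 < w) by (apply Rmin_glb_lt; [lra | apply Rdiv_lt_0_compat; lra]).
  assert (Hws : w <= s) by apply Rmin_l.
  assert (Hwh : (Rabs K + 1) * w <= h s / 2).
  { apply Rle_trans with ((Rabs K + 1) * (h s / (2 * (Rabs K + 1)))).
    - apply Rmult_le_compat_l; [lra | apply Rmin_r].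
    - right; field; lra. }
  destruct (Hh w (conj Hw Hws)) as [H1 H2].
  assert (K * w <= Rabs K * w) by (apply Rmult_le_compat_r; [lra | apply Rle_abs]).
  lra.
Qed.

(** ** The standard normal density and distribution function *)

Lemma sqrt_2PI_pos : 0 < sqrt (2 * PI).
Proof. apply sqrt_lt_R0. generalize PI_RGT_0; lra. Qed.

Lemma phi_pos x : 0 < phi x.
Proof. apply Rdiv_lt_0_compat; [apply exp_pos | apply sqrt_2PI_pos]. Qed.

Lemma phi_le_max x : phi x <= / sqrt (2 * PI).
Proof.
  unfold phi, Rdiv. rewrite <- (Rmult_1_l (/ sqrt (2 * PI))) at 2.
  apply Rmult_le_compat_r; [left; apply Rinv_0_lt_compat, sqrt_2PI_pos |].
  rewrite <- exp_0. apply exp_monotone. generalize (Rle_0_sqr x). unfold Rsqr. simpl. lra.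
Qed.

(** Gaussian left tail: [phi x <= K * exp x] with [K = e^(1/2)/sqrt(2 pi)],
    since [-x^2/2 <= x + 1/2]. *)
Definition phi_tail_const : R := exp (1 / 2) / sqrt (2 * PI).

Lemma phi_tail_const_pos : 0 < phi_tail_const.
Proof. apply Rdiv_lt_0_compat; [apply exp_pos | apply sqrt_2PI_pos]. Qed.

Lemma phi_le_exp x : phi x <= phi_tail_const * exp x.
Proof.
  unfold phi, phi_tail_const, Rdiv.
  rewrite Rmult_assoc, (Rmult_comm (/ _)), <- Rmult_assoc, <- exp_plus.
  apply Rmult_le_compat_r; [left; apply Rinv_0_lt_compat, sqrt_2PI_pos |].
  apply exp_monotone. generalize (Rle_0_sqr (x + 1)). unfold Rsqr. simpl. lra.
Qed.

Lemma phi_continuous x : continuous phi x.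
Proof.
  apply (ex_derive_continuous (V := R_NormedModule)). unfold phi. auto_derive.
  generalize sqrt_2PI_pos; lra.
Qed.

Lemma phi_ex_RInt a b : ex_RInt phi a b.
Proof. apply (ex_RInt_continuous (V := R_CompleteNormedModule)). intros; apply phi_continuous. Qed.

Lemma phi_is_RInt a b : is_RInt phi a b (RInt phi a b).
Proof. apply (RInt_correct (V := R_CompleteNormedModule)), phi_ex_RInt. Qed.

Lemma RInt_phi_bounds a b : a <= b -> 0 <= RInt phi a b <= phi_tail_const * exp b.
Proof.
  intros Hab. split.
  - apply RInt_ge_0; auto using phi_ex_RInt. intros; left; apply phi_pos.
  - apply Rle_trans with (phi_tail_const * (exp b - exp a)).
    + apply is_RInt_le with (f := phi) (g := fun t => scal phi_tail_const (exp t)) (a := a) (b := b);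
        auto using phi_is_RInt.
      * exact (is_RInt_scal (V := R_NormedModule) exp a b phi_tail_const _ (is_RInt_exp a b)).
      * intros t _. apply phi_le_exp.
    + generalize phi_tail_const_pos (exp_pos a); nra.
Qed.

Lemma RInt_phi_left_tail_converges x :
  exists l, filterlim (fun a => RInt phi a x) (Rbar_locally m_infty) (locally l).
Proof.
  apply filterlim_locally_cauchy. intros eps.
  assert (Heps : 0 < eps / phi_tail_const)
    by (apply Rdiv_lt_0_compat; [apply cond_pos | apply phi_tail_const_pos]).
  assert (Hsmall : forall u v, u <= v -> v < ln (eps / phi_tail_const) -> v < x ->
            Rabs (RInt phi v x - RInt phi u x) < eps).
  { intros u v Huv Hv Hvx.
    rewrite <- (RInt_Chasles phi u v x) by apply phi_ex_RInt.
    change (plus (RInt phi u v) (RInt phi v x)) with (RInt phi u v + RInt phi v x).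
    replace (RInt phi v x - (RInt phi u v + RInt phi v x)) with (- RInt phi u v) by ring.
    destruct (RInt_phi_bounds u v Huv) as [H0 H1].
    rewrite Rabs_Ropp, Rabs_pos_eq by exact H0.
    apply Rle_lt_trans with (1 := H1).
    apply exp_increasing in Hv. rewrite exp_ln in Hv by exact Heps.
    generalize phi_tail_const_pos; intros HK.
    replace (pos eps) with (phi_tail_const * (eps / phi_tail_const)) by (field; lra).
    now apply Rmult_lt_compat_l. }
  exists (fun a => a < ln (eps / phi_tail_const) /\ a < x). split.
  - exists (Rmin (ln (eps / phi_tail_const)) x). intros a Ha.
    split; eapply Rlt_le_trans; eauto using Rmin_l, Rmin_r.
  - intros u v [Hu Hux] [Hv Hvx].
    change (Rabs (RInt phi v x - RInt phi u x) < eps).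
    destruct (Rle_dec u v) as [Huv | Huv]; [now apply Hsmall |].
    rewrite <- Rabs_Ropp. replace (- (RInt phi v x - RInt phi u x)) with (RInt phi u x - RInt phi v x) by ring.
    apply Hsmall; auto; lra.
Qed.

Lemma Phi_limit x : is_lim (fun a => RInt phi a x) m_infty (Phi x).
Proof.
  destruct (RInt_phi_left_tail_converges x) as [l Hl].
  assert (Hgen : is_RInt_gen phi (Rbar_locally m_infty) (at_point x) l).
  { apply filterlimi_lim_ext_loc with (f := fun ab => RInt phi (fst ab) (snd ab)).
    - exists (fun _ => True) (fun _ => True); [exists 0; auto | unfold at_point; auto |].
      intros a b _ _. apply phi_is_RInt.
    - intros P HP. destruct (Hl P HP) as [M HM].
      exists (fun a => a < M) (fun b => b = x); [exists M; auto | unfold at_point; auto |].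
      intros a b Ha ->. now apply HM. }
  unfold Phi. rewrite (is_RInt_gen_unique _ _ Hgen). exact Hl.
Qed.

Lemma Phi_Chasles x y : Phi y = Phi x + RInt phi x y.
Proof.
  assert (H1 : is_lim (fun a => RInt phi a x + RInt phi x y) m_infty (Phi x + RInt phi x y)).
  { apply (is_lim_plus' (fun a => RInt phi a x) (fun _ => RInt phi x y)).
    - apply Phi_limit.
    - apply is_lim_const. }
  assert (H2 : is_lim (fun a => RInt phi a x + RInt phi x y) m_infty (Phi y)).
  { apply is_lim_ext with (f := fun a => RInt phi a y); [| apply Phi_limit].
    intros a. symmetry. apply (RInt_Chasles (V := R_CompleteNormedModule)); apply phi_ex_RInt. }
  apply is_lim_unique in H1, H2. rewrite H1 in H2. now injection H2.
Qed.

Lemma Phi_bounds x : 0 <= Phi x <= phi_tail_const * exp x.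
Proof.
  split.
  - assert (H := filterlim_le (F := Rbar_locally m_infty) (fun _ => 0) (fun a => RInt phi a x) 0 (Phi x)).
    simpl in H. apply H; [| apply filterlim_const | apply Phi_limit].
    exists x; intros a Ha; apply RInt_phi_bounds; lra.
  - assert (H := filterlim_le (F := Rbar_locally m_infty) (fun a => RInt phi a x)
                   (fun _ => phi_tail_const * exp x) (Phi x) (phi_tail_const * exp x)).
    simpl in H. apply H; [| apply Phi_limit | apply filterlim_const].
    exists x; intros a Ha; apply RInt_phi_bounds; lra.
Qed.

Lemma Phi_derive x : is_derive Phi x (phi x).
Proof.
  apply is_derive_ext with (f := fun y => Phi 0 + RInt phi 0 y); [intros t; symmetry; apply Phi_Chasles |].
  replace (phi x) with (0 + phi x) by ring.
  apply (is_derive_plus (V := R_NormedModule) (fun _ => Phi 0) (RInt phi 0)).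
  - exact (is_derive_const (V := R_NormedModule) (Phi 0) x).
  - apply (is_derive_RInt (V := R_NormedModule) phi (RInt phi 0) 0 x).
    + apply filter_forall. intros b. apply phi_is_RInt.
    + apply phi_continuous.
Qed.

(** ** The Black-Scholes price: vega, monotonicity, positivity *)

Lemma d1_minus_d2 k v : v <> 0 -> Defs.d1 k v = Defs.d2 k v + v.
Proof. intros Hv. unfold Defs.d1, Defs.d2. field. exact Hv. Qed.

(** The classical identity [e^k phi(d2) = phi(d1)], from [d1^2 - d2^2 = -2k]. *)
Lemma exp_phi_d2 k v : v <> 0 -> exp k * phi (Defs.d2 k v) = phi (Defs.d1 k v).
Proof.
  intros Hv. unfold phi, Rdiv. rewrite <- Rmult_assoc, <- exp_plus.
  do 2 f_equal. unfold Defs.d1, Defs.d2. field. exact Hv.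
Qed.

(** Vega: the derivative of the price in the volatility is [phi(d1)]; the two
    chain-rule terms combine by [exp_phi_d2]. *)
Lemma C_BS_derive k v : v <> 0 -> is_derive (C_BS k) v (phi (Defs.d1 k v)).
Proof.
  intros Hv. unfold C_BS.
  assert (Hd1 : is_derive (Defs.d1 k) v (k / v ^ 2 + 1 / 2))
    by (unfold Defs.d1; auto_derive; [exact Hv | field; exact Hv]).
  assert (Hd2 : is_derive (Defs.d2 k) v (k / v ^ 2 - 1 / 2))
    by (unfold Defs.d2; auto_derive; [exact Hv | field; exact Hv]).
  assert (H1 := is_derive_comp Phi (Defs.d1 k) v _ _ (Phi_derive _) Hd1).
  assert (H2 := is_derive_scal _ v (exp k) _ (is_derive_comp Phi (Defs.d2 k) v _ _ (Phi_derive _) Hd2)).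
  assert (H := is_derive_minus _ _ _ _ _ H1 H2).
  simpl in H. unfold minus, plus, opp, scal in H; simpl in H; unfold mult in H; simpl in H.
  replace (phi (Defs.d1 k v)) with
    ((k / v ^ 2 + 1 / 2) * phi (Defs.d1 k v) + - (exp k * ((k / v ^ 2 - 1 / 2) * phi (Defs.d2 k v)))).
  - exact H.
  - rewrite <- (exp_phi_d2 k v Hv). field. exact Hv.
Qed.

Lemma C_BS_strict_incr k a b : 0 < a < b -> C_BS k a < C_BS k b.
Proof.
  intros Hab.
  destruct (mean_value (C_BS k) (fun v => phi (Defs.d1 k v)) a b) as [xi [_ Eq]]; [lra | |].
  - intros x Hx. apply C_BS_derive. lra.
  - generalize (phi_pos (Defs.d1 k xi)). nra.
Qed.

(** Small-volatility upper bound: [C_BS <= Phi(d1) - Phi(d2) <= v / sqrt (2 pi)]. *)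
Lemma C_BS_le_linear k v : 0 <= k -> 0 < v -> C_BS k v <= v * / sqrt (2 * PI).
Proof.
  intros Hk Hv. unfold C_BS.
  rewrite (Phi_Chasles (Defs.d2 k v) (Defs.d1 k v)).
  assert (Hmass : RInt phi (Defs.d2 k v) (Defs.d1 k v)
                   <= (Defs.d1 k v - Defs.d2 k v) * / sqrt (2 * PI)).
  { eapply Rle_trans; [apply Rle_abs |].
    apply (norm_RInt_le_const (V := R_NormedModule) phi); [rewrite d1_minus_d2; lra | | apply phi_is_RInt].
    intros x _. unfold norm; simpl. rewrite Rabs_pos_eq by (left; apply phi_pos). apply phi_le_max. }
  replace (Defs.d1 k v - Defs.d2 k v) with v in Hmass by (rewrite d1_minus_d2 by lra; ring).
  assert (1 <= exp k) by now apply one_le_exp.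
  destruct (Phi_bounds (Defs.d2 k v)). nra.
Qed.

(** [(e^k - 1) e^d2 <= e^k v]: combine [e^k - 1 <= k e^k], [e^d2 <= e^(-k/v)]
    and [k <= v e^(k/v)]. *)
Lemma expm1_exp_d2_le k v : 0 <= k -> 0 < v -> (exp k - 1) * exp (Defs.d2 k v) <= exp k * v.
Proof.
  intros Hk Hv.
  assert (Hexpm1 : exp k - 1 <= k * exp k).
  { generalize (exp_ineq1_le (- k)). rewrite exp_Ropp. intros H.
    generalize (exp_pos k); intros.
    apply Rmult_le_compat_r with (r := exp k) in H; [| lra].
    rewrite Rinv_l in H by lra. lra. }
  assert (Hd2 : exp (Defs.d2 k v) * exp (k / v) <= 1).
  { rewrite <- exp_plus, <- exp_0. apply exp_monotone. unfold Defs.d2. lra. }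
  assert (Hkv : k <= v * exp (k / v)).
  { generalize (exp_ineq1_le (k / v)). intros H.
    assert (v * (1 + k / v) = v + k) by (field; lra). nra. }
  assert (0 <= exp k - 1) by (generalize (one_le_exp k Hk); lra).
  generalize (exp_pos k) (exp_pos (Defs.d2 k v)) (exp_pos (k / v)); intros.
  nra.
Qed.

(** Small-volatility lower bound: [C_BS >= -(e^k - 1) Phi(d2) >= - K e^k v]. *)
Lemma C_BS_ge_linear k v : 0 <= k -> 0 < v -> - (phi_tail_const * exp k) * v <= C_BS k v.
Proof.
  intros Hk Hv. unfold C_BS.
  rewrite (Phi_Chasles (Defs.d2 k v) (Defs.d1 k v)).
  assert (0 <= RInt phi (Defs.d2 k v) (Defs.d1 k v)) by (apply RInt_phi_bounds; rewrite d1_minus_d2; lra).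
  assert (0 <= exp k - 1) by (generalize (one_le_exp k Hk); lra).
  destruct (Phi_bounds (Defs.d2 k v)).
  generalize (expm1_exp_d2_le k v Hk Hv) phi_tail_const_pos. nra.
Qed.

(** Prices are positive: [C_BS] increases from the limit 0 at zero volatility. *)
Lemma C_BS_pos k v : 0 <= k -> 0 < v -> 0 < C_BS k v.
Proof.
  intros Hk Hv.
  assert (Hhalf : 0 <= C_BS k (v / 2)).
  { enough (- C_BS k (v / 2) <= 0) by lra.
    apply (nonpos_of_linear_bound (fun w => - C_BS k w) (phi_tail_const * exp k)); [lra |].
    intros w Hw. split.
    - destruct (Req_dec w (v / 2)) as [-> | Hne]; [lra |].
      generalize (C_BS_strict_incr k w (v / 2)); lra.
    - generalize (C_BS_ge_linear k w Hk (proj1 Hw)); lra. }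
  generalize (C_BS_strict_incr k (v / 2) v); lra.
Qed.

(** ** Concavity of the log-price *)

(** Logarithmic slope of the vega [v |-> phi(d1 k v)], i.e. the derivative of
    [- d1(v)^2 / 2]. *)
Definition vega_log_slope (k v : R) : R := k ^ 2 / v ^ 3 - v / 4.

Lemma vega_derive k v : 0 < v ->
  is_derive (fun s => phi (Defs.d1 k s)) v (phi (Defs.d1 k v) * vega_log_slope k v).
Proof.
  intros Hv. unfold phi, Defs.d1, vega_log_slope. auto_derive.
  - generalize sqrt_2PI_pos; intros; repeat split; lra.
  - replace (exp (- (- k / v + v / 2) ^ 2 / 2))
      with (exp (- ((- k * / v + v * / 2) * ((- k * / v + v * / 2) * 1)) * / 2)) by (f_equal; field; lra).
    field. generalize sqrt_2PI_pos; intros; split; lra.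
Qed.

(** The vega is log-concave in the volatility: it lies below its exponential
    tangent at any point [s]; the gap in the exponent is an explicit sum of squares. *)
Lemma vega_below_exp_tangent k v s : 0 < v -> 0 < s ->
  phi (Defs.d1 k v) <= phi (Defs.d1 k s) * exp (vega_log_slope k s * (v - s)).
Proof.
  intros Hv Hs. unfold phi, Rdiv.
  rewrite Rmult_assoc, (Rmult_comm (/ _)), <- Rmult_assoc, <- exp_plus.
  apply Rmult_le_compat_r; [left; apply Rinv_0_lt_compat, sqrt_2PI_pos |].
  apply exp_monotone. unfold Defs.d1, vega_log_slope.
  assert (Hgap : - (- k / s + s / 2) ^ 2 * / 2 + (k ^ 2 / s ^ 3 - s / 4) * (v - s)
                 - (- (- k / v + v / 2) ^ 2 * / 2)
                 = (v - s) ^ 2 / 8 + k ^ 2 * (v - s) ^ 2 * (2 * v + s) / (2 * v ^ 2 * s ^ 3))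
    by (field; lra).
  assert (0 <= (v - s) ^ 2 / 8) by (generalize (pow2_ge_0 (v - s)); lra).
  assert (0 <= k ^ 2 * (v - s) ^ 2 * (2 * v + s) / (2 * v ^ 2 * s ^ 3)).
  { apply Rdiv_le_0_compat; [| generalize (pow_lt v 2 Hv) (pow_lt s 3 Hs); nra].
    generalize (pow2_ge_0 k) (pow2_ge_0 (v - s)); intros.
    apply Rmult_le_pos; [apply Rmult_le_pos |]; lra. }
  lra.
Qed.

(** The difference between [C_BS] and the antiderivative [phi(d1 s) e^(r (v-s)) / r]
    of the exponential tangent is nonincreasing on (0, s] and [C_BS(w) = O(w)]. *)
Lemma C_BS_le_vega_over_slope k s : 0 <= k -> 0 < s -> 0 < vega_log_slope k s ->
  C_BS k s <= phi (Defs.d1 k s) / vega_log_slope k s.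
Proof.
  intros Hk Hs Hr.
  set (r := vega_log_slope k s). set (F := phi (Defs.d1 k s)).
  set (majorant := fun v => F / r * exp (r * (v - s))).
  assert (Hmaj_s : majorant s = F / r)
    by (unfold majorant; replace (r * (s - s)) with 0 by ring; rewrite exp_0; ring).
  assert (Hmaj_pos : forall w, 0 < majorant w).
  { intros w. apply Rmult_lt_0_compat; [apply Rdiv_lt_0_compat; [apply phi_pos | exact Hr] | apply exp_pos]. }
  assert (Hgap : forall w, 0 < w <= s -> C_BS k s - majorant s <= C_BS k w - majorant w).
  { intros w Hw.
    destruct (mean_value (fun v => C_BS k v - majorant v)
                (fun v => phi (Defs.d1 k v) - F * exp (r * (v - s))) w s) as [xi [Hxi Eq]]; [lra | |].
    - intros x Hx. apply (is_derive_minus (V := R_NormedModule)); [apply C_BS_derive; lra |].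
      unfold majorant. auto_derive; [exact I |]. replace (x + - s) with (x - s) by ring. unfold F, r; field; lra.
    - assert (phi (Defs.d1 k xi) - F * exp (r * (xi - s)) <= 0)
        by (generalize (vega_below_exp_tangent k xi s ltac:(lra) Hs); fold r F; lra).
      nra. }
  rewrite <- Hmaj_s.
  enough (C_BS k s - majorant s <= 0) by lra.
  apply (nonpos_of_linear_bound (fun w => C_BS k w - majorant w) (/ sqrt (2 * PI)) s Hs).
  intros w Hw. split; [now apply Hgap |].
  generalize (C_BS_le_linear k w Hk (proj1 Hw)) (Hmaj_pos w). lra.
Qed.

(** The vega-to-price ratio, i.e. the derivative of [log C_BS]. *)
Definition vega_price_ratio (k v : R) : R := phi (Defs.d1 k v) / C_BS k v.

Lemma vega_price_ratio_pos k v : 0 <= k -> 0 < v -> 0 < vega_price_ratio k v.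
Proof. intros Hk Hv. apply Rdiv_lt_0_compat; [apply phi_pos | now apply C_BS_pos]. Qed.

(** [log C_BS] is concave: its derivative [phi(d1) / C_BS] is nonincreasing,
    since the derivative of the ratio has the sign of [r C_BS - phi(d1) <= 0]. *)
Lemma vega_price_ratio_noninc k a b : 0 <= k -> 0 < a <= b ->
  vega_price_ratio k b <= vega_price_ratio k a.
Proof.
  intros Hk Hab.
  set (dratio := fun v => phi (Defs.d1 k v) * (vega_log_slope k v * C_BS k v - phi (Defs.d1 k v))
                          / C_BS k v ^ 2).
  destruct (mean_value (vega_price_ratio k) dratio a b) as [xi [Hxi Eq]]; [lra | |].
  - intros x Hx. unfold vega_price_ratio, dratio.
    assert (HC : 0 < C_BS k x) by (apply C_BS_pos; lra).
    replace (phi (Defs.d1 k x) * (vega_log_slope k x * C_BS k x - phi (Defs.d1 k x)) / C_BS k x ^ 2)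
      with (((phi (Defs.d1 k x) * vega_log_slope k x) * C_BS k x - phi (Defs.d1 k x) * phi (Defs.d1 k x))
            / C_BS k x ^ 2) by (field; lra).
    apply (is_derive_div (fun s => phi (Defs.d1 k s)) (C_BS k)); [apply vega_derive; lra | apply C_BS_derive; lra | lra].
  - assert (HC : 0 < C_BS k xi) by (apply C_BS_pos; lra).
    assert (Hkey : vega_log_slope k xi * C_BS k xi <= phi (Defs.d1 k xi)).
    { destruct (Rle_lt_dec (vega_log_slope k xi) 0) as [Hr | Hr].
      - generalize (phi_pos (Defs.d1 k xi)). nra.
      - generalize (C_BS_le_vega_over_slope k xi Hk ltac:(lra) Hr). intros Hb.
        apply Rmult_le_compat_l with (r := vega_log_slope k xi) in Hb; [| lra].
        replace (vega_log_slope k xi * (phi (Defs.d1 k xi) / vega_log_slope k xi))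
          with (phi (Defs.d1 k xi)) in Hb by (field; lra).
        exact Hb. }
    assert (dratio xi <= 0).
    { unfold dratio, Rdiv. apply Rmult_le_0_r.
      - generalize (phi_pos (Defs.d1 k xi)). nra.
      - left. apply Rinv_0_lt_compat, pow_lt, HC. }
    nra.
Qed.

(** ** Newton's method for an increasing concave function *)

Section NewtonConcave.

Variables (G dG : R -> R) (a root : R).
Hypothesis G_derive : forall y, a < y -> is_derive G y (dG y).
Hypothesis dG_pos : forall y, a < y -> 0 < dG y.
Hypothesis dG_noninc : forall x y, a < x <= y -> dG y <= dG x.
Hypothesis G_root : G root = 0.

Lemma Derive_G y : a < y -> Derive G y = dG y.
Proof. intros Hy. now apply is_derive_unique, G_derive. Qed.

Lemma G_strict_incr x y : a < x < y -> G x < G y.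
Proof.
  intros Hxy. destruct (mean_value G dG x y) as [xi [Hxi Eq]]; [lra | intros; apply G_derive; lra |].
  generalize (dG_pos xi ltac:(lra)). nra.
Qed.

Lemma G_nonpos_below_root y : a < y <= root -> G y <= 0.
Proof.
  intros Hy. rewrite <- G_root.
  destruct (Req_dec y root) as [-> | Hne]; [lra | left; apply G_strict_incr; lra].
Qed.

Lemma G_below_tangent y z : a < y <= z -> G z <= G y + dG y * (z - y).
Proof.
  intros Hyz. destruct (mean_value G dG y z) as [xi [Hxi Eq]]; [lra | intros; apply G_derive; lra |].
  assert (dG xi <= dG y) by (apply dG_noninc; lra). nra.
Qed.

Lemma newton_step_bounds y : a < y <= root -> y <= y - G y / dG y <= root.
Proof.
  intros Hy. assert (Hd := dG_pos y ltac:(lra)).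
  assert (Hg := G_nonpos_below_root y Hy).
  assert (Ht := G_below_tangent y root Hy). rewrite G_root in Ht.
  set (q := G y / dG y).
  assert (Hq : q * dG y = G y) by (unfold q; field; lra).
  assert (q <= 0) by nra.
  assert (- q <= root - y) by nra.
  lra.
Qed.

Variable s : nat -> R.
Hypothesis s_start : a < s 0%nat <= root.
Hypothesis s_newton : forall n, s (S n) = s n - G (s n) / Derive G (s n).

Lemma newton_iterates_below_root n : a < s n <= root.
Proof.
  induction n as [| n IH]; [exact s_start |].
  rewrite s_newton, Derive_G by lra. destruct (newton_step_bounds _ IH). lra.
Qed.

Lemma newton_iterates_incr n : s n <= s (S n).
Proof.
  destruct (newton_iterates_below_root n) as [Ha Hr].
  rewrite s_newton, Derive_G by exact Ha. now apply newton_step_bounds.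
Qed.

(** The increments are bounded below uniformly by [-G(L) / dG(s 0)], where [L]
    bounds the iterates: [G] increases and [dG] decreases along the sequence. *)
Lemma newton_increment_lower_bound L n : (forall m, s m <= L) ->
  - G L / dG (s 0%nat) <= s (S n) - s n.
Proof.
  intros HL. assert (Hn := newton_iterates_below_root n).
  assert (Hs0n : s 0%nat <= s n).
  { clear HL Hn. induction n as [| m IHm]; [lra |].
    generalize (newton_iterates_incr m); lra. }
  assert (Hd0 := dG_pos (s 0%nat) ltac:(lra)). assert (Hdn := dG_pos (s n) ltac:(lra)).
  assert (HG : - G L <= - G (s n)).
  { destruct (Req_dec (s n) L) as [-> | Hne]; [lra |].
    generalize (G_strict_incr (s n) L ltac:(generalize (HL n); lra)); lra. }
  assert (Hdd : dG (s n) <= dG (s 0%nat)) by (apply dG_noninc; lra).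
  assert (Hgn := G_nonpos_below_root (s n) Hn).
  rewrite s_newton, Derive_G by lra.
  apply Rle_trans with (- G (s n) / dG (s 0%nat)).
  - unfold Rdiv. apply Rmult_le_compat_r; [left; now apply Rinv_0_lt_compat | exact HG].
  - replace (s n - G (s n) / dG (s n) - s n) with (- G (s n) / dG (s n)) by (field; lra).
    unfold Rdiv. apply Rmult_le_compat_l; [lra | now apply Rinv_le_contravar].
Qed.

Theorem newton_monotone_convergence :
  (forall n, s n <= s (S n)) /\ (forall n, s n <= root) /\ is_lim_seq s root.
Proof.
  assert (Hmono : forall n, s n <= s (S n)) by exact newton_iterates_incr.
  assert (Hbnd : forall n, s n <= root) by (intros n; apply newton_iterates_below_root).
  split; [exact Hmono | split; [exact Hbnd |]].
  destruct (ex_finite_lim_seq_incr s root Hmono Hbnd) as [L HL].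
  assert (HsL : forall n, s n <= L) by (apply is_lim_seq_incr_compare; auto).
  assert (HLroot : L <= root)
    by exact (is_lim_seq_le s (fun _ => root) L root Hbnd HL (is_lim_seq_const root)).
  assert (Ha : a < L) by (generalize (HsL 0%nat) (newton_iterates_below_root 0); lra).
  (* passing to the limit in the increment bound gives [G L >= 0] *)
  assert (HGL : - G L / dG (s 0%nat) <= 0).
  { assert (Hlim := is_lim_seq_minus' _ _ _ _ (proj1 (is_lim_seq_incr_1 s L) HL) HL).
    replace 0 with (L - L) by ring.
    apply (is_lim_seq_le (fun _ => - G L / dG (s 0%nat)) _ _ _
             (fun n => newton_increment_lower_bound L n HsL) (is_lim_seq_const _) Hlim). }
  assert (Hd0 := dG_pos (s 0%nat) ltac:(generalize (newton_iterates_below_root 0); lra)).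
  assert (0 <= G L).
  { destruct (Rle_lt_dec 0 (G L)) as [? | Hlt]; [assumption |].
    assert (0 < - G L / dG (s 0%nat)) by (apply Rdiv_lt_0_compat; lra). lra. }
  replace root with L; [exact HL |].
  destruct (Req_dec L root) as [E | Hne]; [exact E |].
  generalize (G_strict_incr L root ltac:(lra)). lra.
Qed.

End NewtonConcave.

(** ** The Newton map for the implied volatility *)

Lemma g_fun_derive k c y : 0 <= k -> 0 < y -> is_derive (g_fun k c) y (vega_price_ratio k y).
Proof.
  intros Hk Hy. unfold g_fun, vega_price_ratio.
  assert (HC : 0 < C_BS k y) by now apply C_BS_pos.
  replace (phi (Defs.d1 k y) / C_BS k y) with (phi (Defs.d1 k y) * / C_BS k y - 0) by (field; lra).
  apply (is_derive_minus (V := R_NormedModule) (fun v => ln (C_BS k v)) (fun _ => ln c)).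
  - apply (is_derive_comp ln (C_BS k) y); [auto_derive; [exact HC | field; lra] | apply C_BS_derive; lra].
  - exact (is_derive_const (V := R_NormedModule) (ln c) y).
Qed.

(** The Newton step [y - g(y)/g'(y)] equals [N(y)]: as [1/g' = C_V], this is
    [y - (log C_BS - log c) C_V] with [log phi(d1) = - d1^2/2 - log sqrt(2 pi)]. *)
Lemma newton_step_eq_N_map k c y : 0 <= k -> 0 < c -> 0 < y ->
  y - g_fun k c y / vega_price_ratio k y = N_map k c y.
Proof.
  intros Hk Hc Hy.
  assert (HC : 0 < C_BS k y) by now apply C_BS_pos.
  assert (HF : 0 < phi (Defs.d1 k y)) by apply phi_pos.
  assert (Hs := sqrt_2PI_pos).
  assert (Hlog_phi : ln (phi (Defs.d1 k y)) = - (Defs.d1 k y) ^ 2 / 2 - ln (sqrt (2 * PI)))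
    by (unfold phi; rewrite ln_div, ln_exp by (apply exp_pos || exact Hs); reflexivity).
  unfold N_map, C_V, g_fun, vega_price_ratio.
  rewrite ln_div, ln_mult, Hlog_phi by assumption.
  field. split; lra.
Qed.

Theorem proposition6 (k c sigma : R) :
  0 <= k -> 0 < c < 1 -> 0 < sigma -> C_BS k sigma = c ->
  (forall y, 0 < y ->
     ex_derive (g_fun k c) y /\
     y - g_fun k c y / Derive (g_fun k c) y = N_map k c y) /\
  (forall s : nat -> R,
     0 < s 0%nat <= sigma ->
     (forall n, s (S n) = s n - g_fun k c (s n) / Derive (g_fun k c) (s n)) ->
     (forall n, s n <= s (S n)) /\ (forall n, s n <= sigma) /\
     is_lim_seq s sigma).
Proof.
  intros Hk Hc _ Hprice.
  assert (Hderive : forall y, 0 < y -> is_derive (g_fun k c) y (vega_price_ratio k y))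
    by (intros; now apply g_fun_derive).
  split.
  - intros y Hy. split; [exists (vega_price_ratio k y); exact (Hderive y Hy) |].
    rewrite (is_derive_unique _ _ _ (Hderive y Hy)). apply newton_step_eq_N_map; lra.
  - intros s Hs0 Hs. apply (newton_monotone_convergence (g_fun k c) (vega_price_ratio k) 0).
    + exact Hderive.
    + intros; now apply vega_price_ratio_pos.
    + intros; now apply vega_price_ratio_noninc.
    + unfold g_fun. rewrite Hprice. ring.
    + exact Hs0.
    + exact Hs.
Qed.
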